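(* Consider a point-to-point block-fading channel whose channel power gain $h(\nu)\ge 0$ at fading state $\nu$ is a random variable with a continuous probability density function, let $\sigma^2>0$ be the receiver noise power and $P_{\rm peak}>0$ a fixed peak power. For a target energy $\bar Q\ge 0$ and an average power budget $P_{\rm avg}\le P_{\rm peak}$, let Problem (P2)$(\bar Q,P_{\rm avg})$ be: maximize $E_\nu[\log(1+\alpha(\nu)h(\nu)p(\nu)/\sigma^2)]$ over functions $p(\nu),\alpha(\nu)$ subject to $E_\nu[(1-\alpha(\nu))h(\nu)p(\nu)]\ge \bar Q$, $E_\nu[p(\nu)]\le P_{\rm avg}$, $0\le p(\nu)\le P_{\rm peak}$ and $0\le\alpha(\nu)\le 1$ for all $\nu$. Let $\{p^a(\nu),\alpha^a(\nu)\}$ and $\{p^b(\nu),\alpha^b(\nu)\}$ be optimal solutions of (P2)$(\bar Q^a,P^a_{\rm avg})$ and (P2)$(\bar Q^b,P^b_{\rm avg})$, respectively. Then for any $0\le\theta\le1$ there exists a feasible pair $\{p^c(\nu),\alpha^c(\nu)\}$ (i.e. $0\le p^c(\nu)\le P_{\rm peak}$, $0\le \alpha^c(\nu)\le 1$ for all $\nu$) such that $E_\nu[r^c(\nu)]\ge\theta E_\nu[r^a(\nu)]+(1-\theta)E_\nu[r^b(\nu)]$, $E_\nu[Q^c(\nu)]\ge\theta\bar Q^a+(1-\theta)\bar Q^b$, and $E_\nu[p^c(\nu)]\le\theta P^a_{\rm avg}+(1-\theta)P^b_{\rm avg}$, where $r^\chi(\nu)=\log\big(1+\frac{h(\nu)\alpha^\chi(\nu)p^\chi(\nu)}{\sigma^2}\big)$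 for $\chi\in\{a,b,c\}$ and $Q^c(\nu)=(1-\alpha^c(\nu))h(\nu)p^c(\nu)$.
   Context: $p(\nu)$ is the transmit power and $\alpha(\nu)\in[0,1]$ the fraction of received signal power split to the information decoder at fading state $\nu$ (the rest goes to the energy harvester); $E_\nu$ denotes expectation over the fading state. *)

From HB Require Import structures.
From mathcomp Require Import all_boot all_order all_algebra.
From mathcomp Require Import all_classical all_reals all_analysis.
Set Implicit Arguments. Unset Strict Implicit. Unset Printing Implicit Defensive.
Import Order.TTheory GRing.Theory Num.Theory.
Import numFieldNormedType.Exports.
Local Open Scope classical_set_scope.
Local Open Scope ring_scope.

(* The fading state nu ranges over a probability space (T, P); E_nu[f] is
   \int[P]_nu f nu (extended-real valued integral). *)

Definition has_continuous_pdf (R : realType) (d : measure_display)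
  (T : measurableType d) (P : probability T R) (h : T -> R) : Prop :=
  exists f : R -> R, continuous (f : R -> R) /\ (forall x, 0 <= f x) /\
    forall A : set R, measurable A ->
      P (h @^-1` A) = (\int[@lebesgue_measure R]_(x in A) (f x)%:E)%E.

Definition rate (R : realType) (T : Type) (h : T -> R) (sigma2 : R)
  (p alpha : T -> R) (nu : T) : R :=
  ln (1 + h nu * alpha nu * p nu / sigma2).

Definition energy (R : realType) (T : Type) (h : T -> R)
  (p alpha : T -> R) (nu : T) : R :=
  (1 - alpha nu) * h nu * p nu.

(* pointwise feasibility: 0 <= p <= Ppeak, 0 <= alpha <= 1, plus measurability
   (so that the expectations are meaningful) *)
Definition pointwise_feasible (R : realType) (d : measure_display)
  (T : measurableType d) (Ppeak : R) (p alpha : T -> R) : Prop :=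
  measurable_fun setT p /\ measurable_fun setT alpha /\
  (forall nu, 0 <= p nu <= Ppeak) /\ (forall nu, 0 <= alpha nu <= 1).

Definition P2_feasible (R : realType) (d : measure_display)
  (T : measurableType d) (P : probability T R) (h : T -> R)
  (Ppeak Qbar Pavg : R) (p alpha : T -> R) : Prop :=
  pointwise_feasible Ppeak p alpha /\
  (\int[P]_nu (energy h p alpha nu)%:E >= Qbar%:E)%E /\
  (\int[P]_nu (p nu)%:E <= Pavg%:E)%E.

Definition P2_optimal (R : realType) (d : measure_display)
  (T : measurableType d) (P : probability T R) (h : T -> R) (sigma2 : R)
  (Ppeak Qbar Pavg : R) (p alpha : T -> R) : Prop :=
  P2_feasible P h Ppeak Qbar Pavg p alpha /\
  forall p' alpha', P2_feasible P h Ppeak Qbar Pavg p' alpha' ->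
    (\int[P]_nu (rate h sigma2 p' alpha' nu)%:E
       <= \int[P]_nu (rate h sigma2 p alpha nu)%:E)%E.

(* Mix the transmit powers,
   p^c = θ p^a + (1-θ) p^b, and also the powers sent to the information
   decoder, x = α p, i.e. x^c = θ x^a + (1-θ) x^b; the splitting ratio is then
   α^c = x^c / p^c, which lies in [0,1] because x ≤ p.  Average power and
   harvested energy (1-α) h p = h (p - x) are affine in (p, x), so they mix
   exactly, while the rate ln (1 + h x / σ²) is concave in x, so it is at least
   the mixture of the two rates. *)

From HB Require Import structures.
From mathcomp Require Import all_boot all_order all_algebra.
From mathcomp Require Import all_classical all_reals all_analysis.
From mathcomp Require Import measurable_realfun lra ring.
Set Implicit Arguments. Unset Strict Implicit. Unset Printing Implicit Defensive.
Import Order.TTheory GRing.Theory Num.Theory.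
Local Open Scope classical_set_scope.
Local Open Scope ring_scope.

Definition convex_comb (R : realType) (T : Type) (t : R) (f g : T -> R) : T -> R :=
  fun nu => t * f nu + (1 - t) * g nu.

Definition decoder_power (R : realType) (T : Type) (p alpha : T -> R) : T -> R :=
  fun nu => alpha nu * p nu.

(* Where the mixed transmit power vanishes so does the mixed decoder power,
   and [x / 0 = 0] makes the ratio 0 there. *)
Definition mixed_split (R : realType) (T : Type) (t : R) (pa alphaa pb alphab : T -> R)
    : T -> R :=
  fun nu => convex_comb t (decoder_power pa alphaa) (decoder_power pb alphab) nu
            / convex_comb t pa pb nu.

Lemma ln_convex_comb_ge (R : realType) (t a b : R) : 0 <= t <= 1 -> 0 < a -> 0 < b ->
  t * ln a + (1 - t) * ln b <= ln (t * a + (1 - t) * b).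
Proof.
by case/andP=> t0 t1 a0 b0; have := concave_ln (Itv01 t0 t1) a0 b0; rewrite !convRE.
Qed.

Lemma rate_ge0 (R : realType) (T : Type) (h : T -> R) (sigma2 : R) (p alpha : T -> R)
    (nu : T) :
  0 <= h nu -> 0 <= alpha nu -> 0 <= p nu -> 0 < sigma2 ->
  0 <= rate h sigma2 p alpha nu.
Proof.
move=> h0 a0 p0 s0; apply: ln_ge0; rewrite lerDl divr_ge0 ?(ltW s0) //.
by rewrite !mulr_ge0.
Qed.

Section ConvexCombination.
Variables (R : realType) (T : Type) (t : R).
Hypothesis t01 : 0 <= t <= 1.

Lemma convex_comb_ge0 (f g : T -> R) nu :
  0 <= f nu -> 0 <= g nu -> 0 <= convex_comb t f g nu.
Proof. by case/andP: t01 => t0 t1 f0 g0; rewrite /convex_comb; nra. Qed.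

Lemma ler_convex_comb (f g f' g' : T -> R) nu :
  f nu <= f' nu -> g nu <= g' nu -> convex_comb t f g nu <= convex_comb t f' g' nu.
Proof. by case/andP: t01 => t0 t1 ff' gg'; rewrite /convex_comb; nra. Qed.

Lemma convex_comb_le (f g : T -> R) (c : R) nu :
  f nu <= c -> g nu <= c -> convex_comb t f g nu <= c.
Proof. by case/andP: t01 => t0 t1 fc gc; rewrite /convex_comb; nra. Qed.

End ConvexCombination.

Section DecoderPower.
Variables (R : realType) (T : Type) (p alpha : T -> R) (nu : T).
Hypotheses (p_ge0 : 0 <= p nu) (alpha01 : 0 <= alpha nu <= 1).

Lemma decoder_power_ge0 : 0 <= decoder_power p alpha nu.
Proof. by case/andP: alpha01 => a0 _; rewrite mulr_ge0. Qed.

Lemma decoder_power_le : decoder_power p alpha nu <= p nu.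
Proof. by case/andP: alpha01 => _ a1; rewrite ler_piMl. Qed.

End DecoderPower.

Lemma rateE (R : realType) (T : Type) (h : T -> R) (sigma2 : R) (p alpha : T -> R) nu :
  rate h sigma2 p alpha nu = ln (1 + h nu * decoder_power p alpha nu / sigma2).
Proof. by rewrite /rate /decoder_power mulrA. Qed.

Lemma energyE (R : realType) (T : Type) (h : T -> R) (p alpha : T -> R) nu :
  energy h p alpha nu = h nu * (p nu - decoder_power p alpha nu).
Proof. by rewrite /energy /decoder_power; ring. Qed.

Section TimeSharing.
Variables (R : realType) (T : Type) (t : R) (pa alphaa pb alphab : T -> R).
Hypotheses (t01 : 0 <= t <= 1)
  (pa_ge0 : forall nu, 0 <= pa nu) (pb_ge0 : forall nu, 0 <= pb nu)
  (alphaa01 : forall nu, 0 <= alphaa nu <= 1) (alphab01 : forall nu, 0 <= alphab nu <= 1).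

Local Notation pc := (convex_comb t pa pb).
Local Notation xc := (convex_comb t (decoder_power pa alphaa) (decoder_power pb alphab)).
Local Notation alphac := (mixed_split t pa alphaa pb alphab).

Lemma mixed_decoder_power_ge0 nu : 0 <= xc nu.
Proof. by apply: convex_comb_ge0 => //; exact: decoder_power_ge0. Qed.

Lemma mixed_decoder_power_le nu : xc nu <= pc nu.
Proof. by apply: ler_convex_comb => //; exact: decoder_power_le. Qed.

Lemma mixed_splitE nu : alphac nu = xc nu / pc nu.
Proof. by []. Qed.

Lemma decoder_power_mixed_split nu : decoder_power pc alphac nu = xc nu.
Proof.
rewrite [LHS]/decoder_power mixed_splitE.
have [pc0|pc_neq0] := eqVneq (pc nu) 0; last by rewrite mulfVK.
have xc0 : xc nu = 0.
  by apply/eqP; rewrite eq_le mixed_decoder_power_ge0 andbT -pc0 mixed_decoder_power_le.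
by rewrite xc0 !mul0r.
Qed.

Lemma mixed_split_01 nu : 0 <= alphac nu <= 1.
Proof.
have pc0 : 0 <= pc nu by exact: convex_comb_ge0.
rewrite mixed_splitE divr_ge0 ?mixed_decoder_power_ge0 //=.
have [->|pc_neq0] := eqVneq (pc nu) 0; first by rewrite invr0 mulr0.
by rewrite ler_pdivrMr ?mul1r ?mixed_decoder_power_le // lt0r pc_neq0.
Qed.

Lemma energy_time_sharing (h : T -> R) nu :
  energy h pc alphac nu = convex_comb t (energy h pa alphaa) (energy h pb alphab) nu.
Proof.
rewrite !energyE decoder_power_mixed_split /convex_comb !energyE; ring.
Qed.

Lemma rate_time_sharing_ge (h : T -> R) (sigma2 : R) nu :
  0 <= h nu -> 0 < sigma2 ->
  convex_comb t (rate h sigma2 pa alphaa) (rate h sigma2 pb alphab) nu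
    <= rate h sigma2 pc alphac nu.
Proof.
move=> h0 s0; rewrite /convex_comb !rateE decoder_power_mixed_split.
have one_add_gt0 p alpha : 0 <= p nu -> 0 <= alpha nu <= 1 ->
    0 < 1 + h nu * decoder_power p alpha nu / sigma2.
  move=> p0 a01; apply: (lt_le_trans ltr01); rewrite lerDl divr_ge0 ?(ltW s0) //.
  by rewrite mulr_ge0 // decoder_power_ge0.
have -> : 1 + h nu * xc nu / sigma2 =
    t * (1 + h nu * decoder_power pa alphaa nu / sigma2)
    + (1 - t) * (1 + h nu * decoder_power pb alphab nu / sigma2).
  by rewrite /convex_comb; ring.
by apply: ln_convex_comb_ge => //; exact: one_add_gt0.
Qed.

End TimeSharing.

Section Integration.
Variables (R : realType) (d : measure_display) (T : measurableType d).

Lemma measurable_convex_comb (t : R) (f g : T -> R) :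
  measurable_fun setT f -> measurable_fun setT g ->
  measurable_fun setT (convex_comb t f g).
Proof.
by move=> mf mg; apply: measurable_funD; apply: measurable_funM => //;
  exact: measurable_cst.
Qed.

Lemma measurable_decoder_power (p alpha : T -> R) :
  measurable_fun setT p -> measurable_fun setT alpha ->
  measurable_fun setT (decoder_power p alpha).
Proof. by move=> mp ma; exact: measurable_funM. Qed.

Lemma measurable_inv_ge0 (f : T -> R) :
  measurable_fun setT f -> (forall nu, 0 <= f nu) ->
  measurable_fun setT (fun nu => (f nu)^-1).
Proof.
move=> mf f0; rewrite (_ : (fun nu => _) = (fun nu => f nu `^ (-1))).
  exact: measurableT_comp (measurable_powR _) mf.
by apply/funext => nu; rewrite powR_inv1.
Qed.

Lemma measurable_mixed_split (t : R) (pa alphaa pb alphab : T -> R) :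
  0 <= t <= 1 -> (forall nu, 0 <= pa nu) -> (forall nu, 0 <= pb nu) ->
  measurable_fun setT pa -> measurable_fun setT alphaa ->
  measurable_fun setT pb -> measurable_fun setT alphab ->
  measurable_fun setT (mixed_split t pa alphaa pb alphab).
Proof.
move=> t01 pa0 pb0 mpa maa mpb mab; apply: measurable_funM.
  by apply: measurable_convex_comb; exact: measurable_decoder_power.
apply: measurable_inv_ge0; first exact: measurable_convex_comb.
by move=> nu; exact: convex_comb_ge0.
Qed.

Lemma measurable_rate (h : T -> R) (sigma2 : R) (p alpha : T -> R) :
  measurable_fun setT h -> measurable_fun setT p -> measurable_fun setT alpha ->
  measurable_fun setT (rate h sigma2 p alpha).
Proof.
move=> mh mp ma; apply: measurableT_comp (@measurable_ln R) _.
apply: measurable_funD; first exact: measurable_cst.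
apply: measurable_funM; last exact: measurable_cst.
by apply: measurable_funM => //; exact: measurable_funM.
Qed.

Lemma measurable_energy (h : T -> R) (p alpha : T -> R) :
  measurable_fun setT h -> measurable_fun setT p -> measurable_fun setT alpha ->
  measurable_fun setT (energy h p alpha).
Proof.
move=> mh mp ma; apply: measurable_funM => //; apply: measurable_funM => //.
by apply: measurable_funB => //; exact: measurable_cst.
Qed.

Lemma integral_convex_comb (mu : {measure set T -> \bar R}) (t : R) (f g : T -> R) :
  0 <= t <= 1 -> measurable_fun setT f -> measurable_fun setT g ->
  (forall nu, 0 <= f nu) -> (forall nu, 0 <= g nu) ->
  (\int[mu]_nu (convex_comb t f g nu)%:E =
     t%:E * \int[mu]_nu (f nu)%:E + (1 - t)%:E * \int[mu]_nu (g nu)%:E)%E.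
Proof.
case/andP=> t0 t1 mf mg f0 g0.
have t0' : 0 <= 1 - t by rewrite subr_ge0.
have mscale (c : R) (k : T -> R) : measurable_fun setT k ->
    measurable_fun setT (fun nu => (c * k nu)%:E).
  by move=> mk; apply/measurable_EFinP; apply: measurable_funM => //;
    exact: measurable_cst.
rewrite /convex_comb; under eq_integral do rewrite EFinD.
rewrite ge0_integralD //; last 4 first.
- by move=> nu _; rewrite lee_fin mulr_ge0.
- exact: mscale.
- by move=> nu _; rewrite lee_fin mulr_ge0.
- exact: mscale.
under eq_integral do rewrite EFinM.
under [X in _ + X]eq_integral do rewrite EFinM.
rewrite ge0_integralZl ?lee_fin //; last 2 first.
- exact/measurable_EFinP.
- by move=> nu _; rewrite lee_fin.
rewrite ge0_integralZl ?lee_fin //; last 2 first.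
- exact/measurable_EFinP.
- by move=> nu _; rewrite lee_fin.
Qed.

End Integration.

Lemma EFin_convex_comb (R : realType) (t a b : R) :
  ((t * a + (1 - t) * b)%:E = t%:E * a%:E + (1 - t)%:E * b%:E)%E.
Proof. by rewrite (EFinD (t * a)) !EFinM. Qed.

Lemma lee_convex_comb (R : realType) (t : R) (x y x' y' : \bar R) :
  0 <= t <= 1 -> (x <= x')%E -> (y <= y')%E ->
  (t%:E * x + (1 - t)%:E * y <= t%:E * x' + (1 - t)%:E * y')%E.
Proof.
case/andP=> t0 t1 xx' yy'.
by rewrite leeD // lee_wpmul2l // lee_fin // subr_ge0.
Qed.

Section ExpectedTimeSharing.
Variables (R : realType) (d : measure_display) (T : measurableType d).
Variables (mu : {measure set T -> \bar R}) (h : T -> R) (Ppeak t : R).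
Variables (pa alphaa pb alphab : T -> R).
Hypotheses (mh : measurable_fun setT h) (h_ge0 : forall nu, 0 <= h nu) (t01 : 0 <= t <= 1)
  (feasible_a : pointwise_feasible Ppeak pa alphaa)
  (feasible_b : pointwise_feasible Ppeak pb alphab).

Local Notation pc := (convex_comb t pa pb).
Local Notation alphac := (mixed_split t pa alphaa pb alphab).

Let mpa : measurable_fun setT pa. Proof. by case: feasible_a. Qed.
Let mpb : measurable_fun setT pb. Proof. by case: feasible_b. Qed.
Let maa : measurable_fun setT alphaa. Proof. by case: feasible_a => _ []. Qed.
Let mab : measurable_fun setT alphab. Proof. by case: feasible_b => _ []. Qed.
Let pa_bd nu : 0 <= pa nu <= Ppeak. Proof. by case: feasible_a => _ [_ []]. Qed.
Let pb_bd nu : 0 <= pb nu <= Ppeak. Proof. by case: feasible_b => _ [_ []]. Qed.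
Let pa_ge0 nu : 0 <= pa nu. Proof. by case/andP: (pa_bd nu). Qed.
Let pb_ge0 nu : 0 <= pb nu. Proof. by case/andP: (pb_bd nu). Qed.
Let alphaa01 nu : 0 <= alphaa nu <= 1. Proof. by case: feasible_a => _ [_ []]. Qed.
Let alphab01 nu : 0 <= alphab nu <= 1. Proof. by case: feasible_b => _ [_ []]. Qed.

Let measurable_pc : measurable_fun setT pc.
Proof. exact: measurable_convex_comb. Qed.

Let measurable_alphac : measurable_fun setT alphac.
Proof. exact: measurable_mixed_split. Qed.

Let energy_ge0 p alpha nu : 0 <= p nu -> 0 <= alpha nu <= 1 -> 0 <= energy h p alpha nu.
Proof. by move=> p0 /andP[a0 a1]; rewrite !mulr_ge0 ?subr_ge0. Qed.

Lemma pointwise_feasible_time_sharing : pointwise_feasible Ppeak pc alphac.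
Proof.
split=> //; split=> //; split=> [nu|]; last exact: mixed_split_01.
rewrite convex_comb_ge0 ?convex_comb_le //.
- by case/andP: (pa_bd nu).
- by case/andP: (pb_bd nu).
Qed.

Lemma integral_power_time_sharing :
  (\int[mu]_nu (pc nu)%:E =
     t%:E * \int[mu]_nu (pa nu)%:E + (1 - t)%:E * \int[mu]_nu (pb nu)%:E)%E.
Proof. exact: integral_convex_comb. Qed.

Lemma integral_energy_time_sharing :
  (\int[mu]_nu (energy h pc alphac nu)%:E =
     t%:E * \int[mu]_nu (energy h pa alphaa nu)%:E
     + (1 - t)%:E * \int[mu]_nu (energy h pb alphab nu)%:E)%E.
Proof.
under eq_integral do rewrite energy_time_sharing //.
by apply: integral_convex_comb => // [||nu|nu];
  [apply: measurable_energy|apply: measurable_energy|apply: energy_ge0|apply: energy_ge0].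
Qed.

Lemma integral_rate_time_sharing_ge (sigma2 : R) : 0 < sigma2 ->
  (t%:E * \int[mu]_nu (rate h sigma2 pa alphaa nu)%:E
   + (1 - t)%:E * \int[mu]_nu (rate h sigma2 pb alphab nu)%:E
   <= \int[mu]_nu (rate h sigma2 pc alphac nu)%:E)%E.
Proof.
move=> s0.
have rate_ge0_01 p alpha nu : 0 <= p nu -> 0 <= alpha nu <= 1 ->
    0 <= rate h sigma2 p alpha nu by move=> p0 /andP[a0 _]; exact: rate_ge0.
rewrite -integral_convex_comb // => [|||nu|nu]; last 4 first.
- exact: measurable_rate.
- exact: measurable_rate.
- exact: rate_ge0_01.
- exact: rate_ge0_01.
apply: ge0_le_integral => //.
- by move=> nu _; rewrite lee_fin convex_comb_ge0 // rate_ge0_01.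
- by apply/measurable_EFinP/measurable_convex_comb; exact: measurable_rate.
- by apply/measurable_EFinP; exact: measurable_rate.
- by move=> nu _; rewrite lee_fin rate_time_sharing_ge.
Qed.

End ExpectedTimeSharing.

Theorem lemma3p1 (R : realType) (d : measure_display) (T : measurableType d)
  (P : probability T R) (h : T -> R) (sigma2 Ppeak : R)
  (Qa Pa Qb Pb : R) (pa alphaa pb alphab : T -> R) (theta : R) :
  measurable_fun setT h -> (forall nu, 0 <= h nu) ->
  has_continuous_pdf P h ->
  0 < sigma2 -> 0 < Ppeak ->
  0 <= Qa -> Pa <= Ppeak -> 0 <= Qb -> Pb <= Ppeak ->
  P2_optimal P h sigma2 Ppeak Qa Pa pa alphaa ->
  P2_optimal P h sigma2 Ppeak Qb Pb pb alphab ->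
  0 <= theta <= 1 ->
  exists pc alphac : T -> R,
    pointwise_feasible Ppeak pc alphac /\
    (\int[P]_nu (rate h sigma2 pc alphac nu)%:E >=
       theta%:E * \int[P]_nu (rate h sigma2 pa alphaa nu)%:E
       + (1 - theta)%:E * \int[P]_nu (rate h sigma2 pb alphab nu)%:E)%E /\
    (\int[P]_nu (energy h pc alphac nu)%:E >= (theta * Qa + (1 - theta) * Qb)%:E)%E /\
    (\int[P]_nu (pc nu)%:E <= (theta * Pa + (1 - theta) * Pb)%:E)%E.
Proof.
move=> mh h0 _ s0 _ _ _ _ _ [[feas_a [Ea Pav]] _] [[feas_b [Eb Pbv]] _] t01.
exists (convex_comb theta pa pb), (mixed_split theta pa alphaa pb alphab).
split; first exact: pointwise_feasible_time_sharing feas_a feas_b.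
split; first by apply: (integral_rate_time_sharing_ge P mh h0 t01 feas_a feas_b s0).
split.
- rewrite (integral_energy_time_sharing P mh h0 t01 feas_a feas_b).
  by rewrite EFin_convex_comb lee_convex_comb.
- rewrite (integral_power_time_sharing P t01 feas_a feas_b).
  by rewrite EFin_convex_comb lee_convex_comb.
Qed.
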